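(* Let $\mathsf M$ be an oriented matroid with set of topes $\mathcal T$ and tope-pairs poset $\mathcal Q$. For $(R,T)\in\mathcal Q$ set $\rho(R,T):=(-T,R)$. Then $\rho$ is a poset isomorphism $\mathcal Q\to\mathcal Q^{op}$, and $\rho^4=\mathrm{id}$.
   Context: Topes of an oriented matroid on ground set $E$ are sign vectors in $\{+,-,0\}^E$ (the maximal covectors); $-T$ is componentwise negation, and the negative of a tope is a tope. The separating set of sign vectors is $S(X,Y)=\{e\in E: X_e=-Y_e\neq0\}$; for a tope $B$, $T\le_B R$ iff $S(B,T)\subseteq S(B,R)$. The tope-pairs poset $\mathcal Q$ is $\mathcal T\times\mathcal T$ with $(T,R)\le(T',R')$ iff $T\le_{T'}R\le_{T'}R'$. $\mathcal Q^{op}$ is the same set with the reversed order. *)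

From HB Require Import structures.
From mathcomp Require Import all_boot.
Set Implicit Arguments. Unset Strict Implicit. Unset Printing Implicit Defensive.

Inductive sign := Plus | Minus | Zero.

Definition sign_to_ord (s : sign) : 'I_3 :=
  match s with Plus => inord 0 | Minus => inord 1 | Zero => inord 2 end.
Definition ord_to_sign (i : 'I_3) : sign :=
  match val i with 0 => Plus | 1 => Minus | _ => Zero end.
Lemma sign_to_ordK : cancel sign_to_ord ord_to_sign.
Proof. by case; rewrite /ord_to_sign /= inordK. Qed.
HB.instance Definition _ := Finite.copy sign (can_type sign_to_ordK).

Definition sopp (s : sign) : sign :=
  match s with Plus => Minus | Minus => Plus | Zero => Zero end.

Definition svec (E : finType) := {ffun E -> sign}.

Definition sneg (E : finType) (X : svec E) : svec E := [ffun e => sopp (X e)].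
Definition szero (E : finType) : svec E := [ffun _ => Zero].
Definition scomp (E : finType) (X Y : svec E) : svec E :=
  [ffun e => if X e == Zero then Y e else X e].

Definition sep (E : finType) (X Y : svec E) : {set E} :=
  [set e | (X e == sopp (Y e)) && (X e != Zero)].

Definition sle (E : finType) (X Y : svec E) : bool :=
  [forall e, (X e == Zero) || (X e == Y e)].

Record oriented_matroid (E : finType) (L : {set svec E}) : Prop := {
  om_zero : szero E \in L;
  om_neg  : forall X, X \in L -> sneg X \in L;
  om_comp : forall X Y, X \in L -> Y \in L -> scomp X Y \in L;
  om_elim : forall X Y e, X \in L -> Y \in L -> e \in sep X Y ->
      exists2 Z, Z \in L &
        (Z e = Zero /\ forall f, f \notin sep X Y -> Z f = scomp X Y f)
}.

Definition tope (E : finType) (L : {set svec E}) (T : svec E) : Prop :=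
  T \in L /\ forall Y, Y \in L -> sle T Y -> Y = T.

Definition tle (E : finType) (B T R : svec E) : bool :=
  sep B T \subset sep B R.

Definition Qle (E : finType) (p q : svec E * svec E) : bool :=
  tle q.1 p.1 p.2 && tle q.1 p.2 q.2.

Definition rho (E : finType) (p : svec E * svec E) : svec E * svec E :=
  (sneg p.2, p.1).

From mathcomp Require Import all_boot.
Set Implicit Arguments. Unset Strict Implicit. Unset Printing Implicit Defensive.

(* All topes of an oriented matroid have the same zero set: if T is a tope and
   X a covector, T o X lies conformally above T, hence equals T.  On sign vectors
   with a common zero set, T <=_B R becomes a coordinatewise statement about
   nonzero signs, and a check on the three signs shows
   T <=_B R  iff  B <=_(-R) T.  Applying this to each of the two conjuncts of
   the order on Q (once, resp. twice) gives (T,R) <= (T',R') iff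
   rho (T',R') <= rho (T,R); the rest is bookkeeping with -(-X) = X. *)

(* [==] on [sign] is copied from ['I_3] and does not reduce on constructors. *)
Definition sign_eqb (a b : sign) : bool :=
  match a, b with Plus, Plus | Minus, Minus | Zero, Zero => true | _, _ => false end.

Lemma sign_eqE (a b : sign) : (a == b) = sign_eqb a b.
Proof. by apply/eqP/idP; case: a; case: b. Qed.

Definition ssep (a b : sign) : bool := (a == sopp b) && (a != Zero).

Lemma in_sep (E : finType) (X Y : svec E) e : (e \in sep X Y) = ssep (X e) (Y e).
Proof. by rewrite inE. Qed.

Lemma ssep_rotate (x y z : sign) :
  (x == Zero) = (y == Zero) -> (y == Zero) = (z == Zero) ->
  (ssep x y ==> ssep x z) = (ssep (sopp z) x ==> ssep (sopp z) y).
Proof. by rewrite /ssep !sign_eqE; case: x; case: y; case: z. Qed.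

Definition zero_set (E : finType) (X : svec E) : {set E} := [set e | X e == Zero].

Lemma zero_setP (E : finType) (X Y : svec E) e :
  zero_set X = zero_set Y -> (X e == Zero) = (Y e == Zero).
Proof. by move/setP/(_ e); rewrite !inE. Qed.

Lemma zero_set_neg (E : finType) (X : svec E) : zero_set (sneg X) = zero_set X.
Proof. by apply/setP=> e; rewrite !inE ffunE !sign_eqE; case: (X e). Qed.

Lemma snegK (E : finType) : involutive (@sneg E).
Proof. by move=> X; apply/ffunP=> e; rewrite !ffunE; case: (X e). Qed.

Lemma sle_neg (E : finType) (X Y : svec E) : sle (sneg X) (sneg Y) = sle X Y.
Proof.
apply/forallP/forallP=> H e; move: (H e); rewrite ?ffunE !sign_eqE;
  by case: (X e); case: (Y e).
Qed.

Lemma tle_rotate (E : finType) (X Y Z : svec E) :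
  zero_set X = zero_set Y -> zero_set Y = zero_set Z ->
  tle X Y Z = tle (sneg Z) X Y.
Proof.
move=> XY YZ; have rot e : ((e \in sep X Y) ==> (e \in sep X Z)) =
    ((e \in sep (sneg Z) X) ==> (e \in sep (sneg Z) Y)).
  by rewrite !in_sep ffunE; apply: ssep_rotate; apply: zero_setP.
by apply/subsetP/subsetP=> H e; apply/implyP; [rewrite -rot | rewrite rot];
  apply/implyP/H.
Qed.

Lemma Qle_rho (E : finType) (a b c d : svec E) :
  zero_set b = zero_set a -> zero_set c = zero_set a -> zero_set d = zero_set a ->
  Qle (a, b) (c, d) = Qle (rho (c, d)) (rho (a, b)).
Proof.
move=> zb zc zd; rewrite /Qle /rho /= andbC; congr andb.
  rewrite (@tle_rotate _ c b d); try congruence.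
  by apply: tle_rotate; rewrite ?zero_set_neg; congruence.
by apply: tle_rotate; congruence.
Qed.

Lemma rho4_id (E : finType) (p : svec E * svec E) : rho (rho (rho (rho p))) = p.
Proof. by case: p => a b; rewrite /rho /= !snegK. Qed.

Lemma rho_inj (E : finType) : injective (@rho E).
Proof. exact: (can_inj (g := fun p => rho (rho (rho p)))) (@rho4_id E). Qed.

Section Topes.

Variables (E : finType) (L : {set svec E}).
Hypothesis om : oriented_matroid L.

Lemma tope_neg T : tope L T -> tope L (sneg T).
Proof.
move=> [TL Tmax]; split; first exact: om_neg.
move=> Y YL; rewrite -sle_neg snegK => /(Tmax _ (om_neg om YL)) <-.
by rewrite snegK.
Qed.

Lemma tope_zero_set_sub T X : tope L T -> X \in L -> zero_set T \subset zero_set X.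
Proof.
move=> [TL Tmax] XL; have TX_le : sle T (scomp T X).
  by apply/forallP=> f; rewrite ffunE !sign_eqE; case: (T f).
have /ffunP TX_T := Tmax _ (om_comp om TL XL) TX_le.
apply/subsetP=> e; rewrite !inE => /eqP Te.
by have := TX_T e; rewrite ffunE Te eqxx => ->.
Qed.

Lemma tope_zero_set T T' : tope L T -> tope L T' -> zero_set T = zero_set T'.
Proof.
move=> T_tope T'_tope; apply/eqP; rewrite eqEsubset.
by rewrite !tope_zero_set_sub //; [case: T_tope | case: T'_tope].
Qed.

Lemma rho_tope p :
  tope L p.1 -> tope L p.2 -> tope L (rho p).1 /\ tope L (rho p).2.
Proof. by move=> p1 /tope_neg p2. Qed.

End Topes.

Theorem lemma3p13 (E : finType) (L : {set svec E}) :
  oriented_matroid L ->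
  (forall R T : svec E, tope L R -> tope L T -> tope L (rho (R, T)).1 /\ tope L (rho (R, T)).2) /\
  (forall p q : svec E * svec E, tope L p.1 -> tope L p.2 -> tope L q.1 -> tope L q.2 ->
     rho p = rho q -> p = q) /\
  (forall q : svec E * svec E, tope L q.1 -> tope L q.2 ->
     exists p, [/\ tope L p.1, tope L p.2 & rho p = q]) /\
  (forall p q : svec E * svec E, tope L p.1 -> tope L p.2 -> tope L q.1 -> tope L q.2 ->
     Qle p q = Qle (rho q) (rho p)) /\
  (forall p : svec E * svec E, rho (rho (rho (rho p))) = p).
Proof.
move=> om; split; [|split; [|split; [|split]]].
- by move=> R T; apply: (rho_tope om (p := (R, T))).
- by move=> p q _ _ _ _; apply: rho_inj.
- move=> q q1 q2; exists (rho (rho (rho q))); rewrite rho4_id.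
  have [r1 r2] := rho_tope om q1 q2; have [s1 s2] := rho_tope om r1 r2.
  by have [t1 t2] := rho_tope om s1 s2.
- case=> a b [c d] /= a_tope b_tope c_tope d_tope.
  by apply: Qle_rho; apply: (tope_zero_set om).
- exact: rho4_id.
Qed.
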